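(* Let $\Lambda$ be a left-artinian ring, $\mathcal{C}=\mathrm{mod}(\Lambda)$, and let $\alpha,\beta$ be radicals on $\mathcal{C}$ such that $\alpha$ preserves epimorphisms. Then $\ell\ell_{q_\beta}(M)\leq\ell\ell^\alpha(M)$ for every $M\in\mathcal{C}$ if and only if $\mathcal{F}_\alpha\subseteq\mathcal{T}_\beta$.
   Context: $\mathcal{C}$ is the category of finitely generated left $\Lambda$-modules; $\mathrm{rad}$, $\mathrm{soc}$ are the radical and socle functors. A pre-radical is an additive subfunctor $\alpha$ of the identity; $q_\alpha:=\mathrm{Id}/\alpha$; a radical is a pre-radical with $\alpha\circ q_\alpha=0$. $\mathcal{F}_\alpha=\{M:\alpha(M)=0\}$, $\mathcal{T}_\alpha=\{M:\alpha(M)=M\}$. For an additive functor $\gamma:\mathcal{C}\to\mathcal{C}$, $F_\gamma=\mathrm{rad}\circ\gamma$, $G_\gamma=\gamma/(\mathrm{soc}\circ\gamma)$ (so $G_\gamma(M)=\gamma(M)/\mathrm{soc}(\gamma(M))$), $\ell\ell^\gamma(M)=\min\{i\geq0:\gamma\circ F_\gamma^{\,i}(M)=0\}$ and $\ell\ell_\gamma(M)=\min\{i\geq0:\gamma\circ G_\gamma^{\,i}(M)=0\}$ (with $\min\emptyset=\infty$). *)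

From HB Require Import structures.
From mathcomp Require Import all_boot all_order all_algebra.
From mathcomp Require Import boolp.

Set Implicit Arguments.
Unset Strict Implicit.
Unset Printing Implicit Defensive.

Import GRing.Theory.
Local Open Scope ring_scope.

Section Gen.
Variables (R : pzRingType) (M : lmodType R).

Definition is_submod (P : pred M) : Prop :=
  [/\ 0 \in P, (forall x y, x \in P -> y \in P -> x + y \in P)
    & (forall (a : R) x, x \in P -> a *: x \in P)].

Definition gen (P : pred M) : pred M :=
  fun x => `[< forall Q : pred M, is_submod Q -> {subset P <= Q} -> x \in Q >].

Lemma genP P x :
  reflect (forall Q : pred M, is_submod Q -> {subset P <= Q} -> x \in Q) (x \in gen P).
Proof. exact: asboolP. Qed.

Lemma gen0 P : 0 \in gen P.
Proof. by apply/genP => Q []. Qed.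
Lemma genD P x y : x \in gen P -> y \in gen P -> x + y \in gen P.
Proof.
move=> /genP hx /genP hy; apply/genP => Q hQ sPQ.
by case: (hQ) => _ hD _; apply: hD; [apply: hx|apply: hy].
Qed.
Lemma genZ P a x : x \in gen P -> a *: x \in gen P.
Proof.
move=> /genP hx; apply/genP => Q hQ sPQ.
by case: (hQ) => _ _ hZ; apply: hZ; apply: hx.
Qed.
Lemma gen_submod P : is_submod (gen P).
Proof. by split; [apply: gen0 | apply: genD | apply: genZ]. Qed.
Lemma genN P x : x \in gen P -> - x \in gen P.
Proof. by move=> h; rewrite -scaleN1r; apply: genZ. Qed.
Lemma genB P x y : x \in gen P -> y \in gen P -> x - y \in gen P.
Proof. by move=> hx hy; apply: genD => //; apply: genN. Qed.

End Gen.

Section SubModule.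
Variables (R : pzRingType) (M : lmodType R) (P : pred M).

Definition subm_car := {x : M | x \in gen P}.
HB.instance Definition _ := Choice.copy subm_car {x : M | x \in gen P}.

Definition sm_zero : subm_car := exist _ 0 (gen0 P).
Definition sm_opp (x : subm_car) : subm_car :=
  exist _ (- sval x) (genN (svalP x)).
Definition sm_add (x y : subm_car) : subm_car :=
  exist _ (sval x + sval y) (genD (svalP x) (svalP y)).
Definition sm_scale (a : R) (x : subm_car) : subm_car :=
  exist _ (a *: sval x) (genZ a (svalP x)).

Lemma sm_inj (x y : subm_car) : sval x = sval y -> x = y.
Proof. by case: x y => [x hx] [y hy] /= e; subst y; rewrite (bool_irrelevance hx hy). Qed.

Lemma sm_addrA : associative sm_add.
Proof. by move=> x y z; apply: sm_inj; rewrite /= addrA. Qed.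
Lemma sm_addrC : commutative sm_add.
Proof. by move=> x y; apply: sm_inj; rewrite /= addrC. Qed.
Lemma sm_add0r : left_id sm_zero sm_add.
Proof. by move=> x; apply: sm_inj; rewrite /= add0r. Qed.
Lemma sm_addNr : left_inverse sm_zero sm_opp sm_add.
Proof. by move=> x; apply: sm_inj; rewrite /= addNr. Qed.

HB.instance Definition _ := GRing.isZmodule.Build subm_car
  sm_addrA sm_addrC sm_add0r sm_addNr.

Lemma sm_scalerA a b (v : subm_car) : sm_scale a (sm_scale b v) = sm_scale (a * b) v.
Proof. by apply: sm_inj; rewrite /= scalerA. Qed.
Lemma sm_scale1r : left_id 1 sm_scale.
Proof. by move=> v; apply: sm_inj; rewrite /= scale1r. Qed.
Lemma sm_scalerDr : right_distributive sm_scale +%R.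
Proof. by move=> a u v; apply: sm_inj; rewrite /= scalerDr. Qed.
Lemma sm_scalerDl (v : subm_car) : {morph sm_scale^~ v : a b / a + b}.
Proof. by move=> a b; apply: sm_inj; rewrite /= scalerDl. Qed.

HB.instance Definition _ := GRing.Zmodule_isLmodule.Build R subm_car
  sm_scalerA sm_scale1r sm_scalerDr sm_scalerDl.

End SubModule.

Definition subm (R : pzRingType) (M : lmodType R) (P : pred M) : lmodType R :=
  subm_car P.

(* The quotient module M / gen P (canonical representatives via choose)     *)
Section QuotModule.
Variables (R : pzRingType) (M : lmodType R) (P : pred M).

Local Notation N := (gen P).

Definition canon (x : M) : M := choose (fun y => x - y \in N) x.

Lemma canon_sub x : x - canon x \in N.
Proof. by apply: (@chooseP _ (fun y => x - y \in N)); rewrite subrr gen0. Qed.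

Lemma canon_eq x y : x - y \in N -> canon x = canon y.
Proof.
move=> hxy; rewrite /canon.
have e : (fun z => x - z \in N) =1 (fun z => y - z \in N).
  move=> z; apply/idP/idP => h.
  - have -> : y - z = (x - z) - (x - y) by rewrite opprB [RHS]addrC addrA subrK.
    by apply: genB.
  - have -> : x - z = (x - y) + (y - z) by rewrite addrA subrK.
    by apply: genD.
rewrite (eq_choose e); apply: choose_id.
- by rewrite -opprB genN.
- by rewrite subrr gen0.
Qed.

Lemma canon_idem x : canon (canon x) = canon x.
Proof. by apply: canon_eq; rewrite -opprB genN // canon_sub. Qed.

Definition quotm_car := {x : M | canon x == x}.
HB.instance Definition _ := Choice.copy quotm_car {x : M | canon x == x}.

Definition qpi (x : M) : quotm_car := exist _ (canon x) (introT eqP (canon_idem x)).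

Lemma qm_inj (x y : quotm_car) : sval x = sval y -> x = y.
Proof. by case: x y => [x hx] [y hy] /= e; subst y; rewrite (bool_irrelevance hx hy). Qed.

Lemma qpi_eq x y : x - y \in N -> qpi x = qpi y.
Proof. by move=> h; apply: qm_inj; rewrite /= (canon_eq h). Qed.

Lemma qpiK (q : quotm_car) : qpi (sval q) = q.
Proof. by apply: qm_inj; case: q => x /= /eqP. Qed.

Lemma canonB x : canon x - x \in N.
Proof. by rewrite -opprB genN // canon_sub. Qed.

Lemma qpiDl x y : qpi (canon x + y) = qpi (x + y).
Proof. by apply: qpi_eq; rewrite (addrC x y) addrKA canonB. Qed.
Lemma qpiDr x y : qpi (x + canon y) = qpi (x + y).
Proof. by rewrite addrC qpiDl addrC. Qed.
Lemma qpiZ a x : qpi (a *: canon x) = qpi (a *: x).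
Proof. by apply: qpi_eq; rewrite -scalerBr; apply: genZ; apply: canonB. Qed.

Definition qm_zero : quotm_car := qpi 0.
Definition qm_opp (x : quotm_car) : quotm_car := qpi (- sval x).
Definition qm_add (x y : quotm_car) : quotm_car := qpi (sval x + sval y).
Definition qm_scale (a : R) (x : quotm_car) : quotm_car := qpi (a *: sval x).

Lemma qm_addrA : associative qm_add.
Proof. by move=> x y z; rewrite /qm_add /= qpiDl qpiDr addrA. Qed.
Lemma qm_addrC : commutative qm_add.
Proof. by move=> x y; rewrite /qm_add addrC. Qed.
Lemma qm_add0r : left_id qm_zero qm_add.
Proof. by move=> x; rewrite /qm_add /qm_zero /= qpiDl add0r qpiK. Qed.
Lemma qm_addNr : left_inverse qm_zero qm_opp qm_add.
Proof. by move=> x; rewrite /qm_add /qm_opp /qm_zero /= qpiDl addNr. Qed.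

HB.instance Definition _ := GRing.isZmodule.Build quotm_car
  qm_addrA qm_addrC qm_add0r qm_addNr.

Lemma qm_scalerA a b (v : quotm_car) :
  qm_scale a (qm_scale b v) = qm_scale (a * b) v.
Proof. by rewrite /qm_scale /= qpiZ scalerA. Qed.
Lemma qm_scale1r : left_id 1 qm_scale.
Proof. by move=> v; rewrite /qm_scale scale1r qpiK. Qed.
Lemma qm_scalerDr' a u v :
  qm_scale a (qm_add u v) = qm_add (qm_scale a u) (qm_scale a v).
Proof. by rewrite /qm_scale /= /qm_add /= qpiZ qpiDl qpiDr scalerDr. Qed.
Lemma qm_scalerDr : right_distributive qm_scale +%R.
Proof. exact: qm_scalerDr'. Qed.
Lemma qm_scalerDl' (v : quotm_car) a b :
  qm_scale (a + b) v = qm_add (qm_scale a v) (qm_scale b v).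
Proof. by rewrite /qm_scale /= /qm_add /= qpiDl qpiDr scalerDl. Qed.
Lemma qm_scalerDl (v : quotm_car) : {morph qm_scale^~ v : a b / a + b}.
Proof. move=> a b; exact: qm_scalerDl'. Qed.

HB.instance Definition _ := GRing.Zmodule_isLmodule.Build R quotm_car
  qm_scalerA qm_scale1r qm_scalerDr qm_scalerDl.

End QuotModule.

Definition quotm (R : pzRingType) (M : lmodType R) (P : pred M) : lmodType R :=
  quotm_car P.

Section Notions.
Variable (R : pzRingType).

Definition left_ideal (I : pred R) : Prop :=
  [/\ 0 \in I, (forall x y, x \in I -> y \in I -> x + y \in I)
    & (forall r x, x \in I -> r * x \in I)].

Definition left_artinian : Prop :=
  forall I : nat -> pred R, (forall n, left_ideal (I n)) ->
    (forall n, {subset I n.+1 <= I n}) ->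
    exists n, forall m, (n <= m)%N -> I m =i I n.

Definition fingen (M : lmodType R) : Prop :=
  exists s : seq M, forall x : M,
    exists c : 'I_(size s) -> R, x = \sum_(i < size s) c i *: s`_i.

Definition zero_mod (M : lmodType R) : Prop := forall x : M, x = 0.

Definition maximal_sub (M : lmodType R) (N : pred M) : Prop :=
  [/\ is_submod N, (exists x, x \notin N)
    & forall K : pred M, is_submod K -> {subset N <= K} ->
        {subset K <= N} \/ (forall x, x \in K)].

Definition simple_sub (M : lmodType R) (S : pred M) : Prop :=
  [/\ is_submod S, (exists2 x, x \in S & x != 0)
    & forall K : pred M, is_submod K -> {subset K <= S} ->
        (forall x, x \in K -> x = 0) \/ {subset S <= K}].

Definition rad (M : lmodType R) : pred M :=
  fun x => `[< forall N : pred M, maximal_sub N -> x \in N >].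

Definition soc (M : lmodType R) : pred M :=
  gen (fun x : M => `[< exists2 S : pred M, simple_sub S & x \in S >]).

Local Unset Implicit Arguments.
Record preradical := Preradical {
  prad : forall M : lmodType R, {pred M};
  prad_submod : forall M : lmodType R, fingen M -> is_submod (prad M);
  prad_nat : forall (M N : lmodType R) (f : {linear M -> N}),
      fingen M -> fingen N -> forall x, x \in prad M -> f x \in prad N
}.
Local Set Implicit Arguments.

Definition pr_obj (a : preradical) (M : lmodType R) : lmodType R :=
  subm (prad a M).
(* q_alpha = Id / alpha (on objects) : M |-> M / alpha(M) *)
Definition q_obj (a : preradical) (M : lmodType R) : lmodType R :=
  quotm (prad a M).

Definition is_radical (a : preradical) : Prop :=
  forall M : lmodType R, fingen M -> zero_mod (pr_obj a (q_obj a M)).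

(* alpha preserves epimorphisms (epis of mod(R) = surjective maps) *)
Definition preserves_epi (a : preradical) : Prop :=
  forall (M N : lmodType R) (f : {linear M -> N}), fingen M -> fingen N ->
    (forall y, exists x, f x = y) ->
    forall y, y \in prad a N -> exists2 x, x \in prad a M & f x = y.

Definition in_F (a : preradical) (M : lmodType R) : Prop :=
  fingen M /\ forall x, x \in prad a M -> x = 0.
Definition in_T (a : preradical) (M : lmodType R) : Prop :=
  fingen M /\ forall x, x \in prad a M.

Definition F_obj (g : lmodType R -> lmodType R) (M : lmodType R) : lmodType R :=
  subm (@rad (g M)).
Definition G_obj (g : lmodType R -> lmodType R) (M : lmodType R) : lmodType R :=
  quotm (@soc (g M)).

End Notions.

(* min of a set of naturals, None = infinity (min of the empty set) *)
Definition ominn (P : nat -> Prop) : option nat :=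
  match pselect (exists n, `[< P n >]) with
  | left h => Some (ex_minn h)
  | right _ => None
  end.

Definition ole (a b : option nat) : bool :=
  match a, b with
  | _, None => true
  | None, Some _ => false
  | Some m, Some n => (m <= n)%N
  end.

Definition ll_up (R : pzRingType) (g : lmodType R -> lmodType R) (M : lmodType R)
  : option nat := ominn (fun i => zero_mod (g (iter i (F_obj g) M))).
Definition ll_low (R : pzRingType) (g : lmodType R -> lmodType R) (M : lmodType R)
  : option nat := ominn (fun i => zero_mod (g (iter i (G_obj g) M))).

From Pilot Require Import Defs.
From HB Require Import structures.
From mathcomp Require Import all_boot all_order all_algebra.
From mathcomp Require Import boolp wochoice.

(* Over a left-artinian ring the Jacobson radical J is nilpotent and R/J is
   semisimple.  Hence rad M = J M, so rad preserves epimorphisms, a module with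
   zero radical is semisimple, and (Hopkins-Levitzki) finitely generated modules
   are noetherian, so every subquotient met below stays in mod R.
   If F_alpha is contained in T_beta, induction on k shows that alpha F^k M = 0
   implies q_beta G^k M = 0.  For the step let Z = M / beta M: alpha F^(k+1) Z = 0
   because alpha and rad preserve epimorphisms, so F^(k+1) Z lies in F_alpha, hence
   in T_beta; it embeds in Z and beta Z = 0, so it vanishes.  Thus alpha F^k Z has
   zero radical, is semisimple and lies in soc Z, whence alpha F^k (Z / soc Z) = 0
   with Z / soc Z = G M.  Conversely, for M in F_alpha, ll^alpha M = 0 forces
   q_beta M = 0, i.e. M is in T_beta. *)

Set Implicit Arguments.
Unset Strict Implicit.
Unset Printing Implicit Defensive.

Import GRing.Theory.
Local Open Scope ring_scope.

(** * Submodules *)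

Section Submodules.
Variables (R : pzRingType) (M : lmodType R).
Implicit Types (P Q A B K L N : pred M) (x y : M).

Lemma submod0 P : is_submod P -> 0 \in P. Proof. by case. Qed.
Lemma submodD P x y : is_submod P -> x \in P -> y \in P -> x + y \in P.
Proof. by case=> _ h _; apply: h. Qed.
Lemma submodZ P a x : is_submod P -> x \in P -> a *: x \in P.
Proof. by case=> _ _ h; apply: h. Qed.
Lemma submodN P x : is_submod P -> x \in P -> - x \in P.
Proof. by move=> hP hx; rewrite -scaleN1r; apply: submodZ. Qed.
Lemma submodB P x y : is_submod P -> x \in P -> y \in P -> x - y \in P.
Proof. by move=> hP hx hy; apply: submodD => //; apply: submodN. Qed.
Lemma submod_sum P (I : Type) (r : seq I) (F : I -> M) :
  is_submod P -> (forall i, F i \in P) -> \sum_(i <- r) F i \in P.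
Proof.
move=> hP hF; elim: r => [|i r IH]; first by rewrite big_nil submod0.
by rewrite big_cons submodD.
Qed.

Definition zerop : pred M := fun x => x == 0.
Lemma zeropE x : (x \in zerop) = (x == 0). Proof. by []. Qed.
Lemma submod_zerop : is_submod zerop.
Proof.
split; first by rewrite zeropE.
- by move=> x y; rewrite !zeropE => /eqP-> /eqP->; rewrite addr0.
- by move=> a x; rewrite !zeropE => /eqP->; rewrite scaler0.
Qed.
Lemma zerop_sub P : is_submod P -> {subset zerop <= P}.
Proof. by move=> hP y /eqP ->; apply: submod0. Qed.

Lemma submod_predT : is_submod (predT : pred M). Proof. by split. Qed.

Lemma submodI P Q : is_submod P -> is_submod Q -> is_submod (predI P Q).
Proof.
move=> hP hQ; split.
- by apply/andP; split; apply: submod0.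
- by move=> x y /andP[? ?] /andP[? ?]; apply/andP; split; apply: submodD.
- by move=> a x /andP[? ?]; apply/andP; split; apply: submodZ.
Qed.

Definition addsm P Q : pred M :=
  fun x => `[< exists p q, [/\ p \in P, q \in Q & x = p + q] >].

Lemma addsmP P Q x :
  reflect (exists p q, [/\ p \in P, q \in Q & x = p + q]) (x \in addsm P Q).
Proof. exact: asboolP. Qed.

Lemma submod_addsm P Q : is_submod P -> is_submod Q -> is_submod (addsm P Q).
Proof.
move=> hP hQ; split.
- by apply/addsmP; exists 0, 0; rewrite !submod0 // addr0.
- move=> x y /addsmP[p [q [hp hq ->]]] /addsmP[p' [q' [hp' hq' ->]]].
  apply/addsmP; exists (p + p'), (q + q'); split; try exact: submodD.
  by rewrite addrACA.
- move=> a x /addsmP[p [q [hp hq ->]]]; apply/addsmP; exists (a *: p), (a *: q).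
  by split; rewrite ?submodZ // scalerDr.
Qed.

Lemma addsml P Q x : is_submod Q -> x \in P -> x \in addsm P Q.
Proof. by move=> hQ hx; apply/addsmP; exists x, 0; rewrite submod0 // addr0. Qed.
Lemma addsmr P Q x : is_submod P -> x \in Q -> x \in addsm P Q.
Proof. by move=> hP hx; apply/addsmP; exists 0, x; rewrite submod0 // add0r. Qed.
Lemma addsm_min P Q K : is_submod K -> {subset P <= K} -> {subset Q <= K} ->
  {subset addsm P Q <= K}.
Proof. by move=> hK hP hQ x /addsmP[p [q [/hP hp /hQ hq ->]]]; apply: submodD. Qed.
Lemma addsmS P Q P' Q' : {subset P <= P'} -> {subset Q <= Q'} ->
  {subset addsm P Q <= addsm P' Q'}.
Proof.
by move=> h1 h2 x /addsmP[p [q [/h1 hp /h2 hq ->]]]; apply/addsmP; exists p, q.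
Qed.

Lemma gen_min P K : is_submod K -> {subset P <= K} -> {subset gen P <= K}.
Proof. by move=> hK hPK x /genP; apply. Qed.
Lemma gen_sub P : {subset P <= gen P}.
Proof. by move=> x hx; apply/genP => K _; apply. Qed.
Lemma gen_id P x : is_submod P -> (x \in gen P) = (x \in P).
Proof. by move=> hP; apply/idP/idP; [apply: gen_min | apply: gen_sub]. Qed.
Lemma genS P Q : {subset P <= Q} -> {subset gen P <= gen Q}.
Proof.
move=> h; apply: gen_min; first exact: gen_submod.
by move=> x /h; apply: gen_sub.
Qed.

Definition cycp x : pred M := fun y => `[< exists r : R, y = r *: x >].

Lemma submod_cycp x : is_submod (cycp x).
Proof.
split.
- by apply/asboolP; exists 0; rewrite scale0r.
- move=> y z /asboolP[r ->] /asboolP[s ->]; apply/asboolP; exists (r + s).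
  by rewrite scalerDl.
- by move=> a y /asboolP[r ->]; apply/asboolP; exists (a * r); rewrite scalerA.
Qed.
Lemma cycp_mem x : x \in cycp x.
Proof. by apply/asboolP; exists 1; rewrite scale1r. Qed.

End Submodules.

Arguments zerop {R M}.
Arguments submod_zerop {R M}.
Arguments submod_predT {R M}.

Lemma not_subsetP (T : Type) (P Q : pred T) :
  ~ {subset P <= Q} -> exists2 x, x \in P & x \notin Q.
Proof.
move=> h; apply: contrapT => h'; apply: h => x hx; apply: contrapT => hq.
by apply: h'; exists x => //; apply/negP.
Qed.

(** * Linear maps, submodule inclusions and quotient projections *)

Section LinearImage.
Variables (R : pzRingType) (M N : lmodType R) (f : {linear M -> N}).

Definition imgp (P : pred M) : pred N :=
  fun y => `[< exists2 x, x \in P & f x = y >].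

Lemma imgpP P y : reflect (exists2 x, x \in P & f x = y) (y \in imgp P).
Proof. exact: asboolP. Qed.

Lemma submod_imgp P : is_submod P -> is_submod (imgp P).
Proof.
move=> hP; split.
- by apply/imgpP; exists 0; rewrite ?submod0 ?linear0.
- move=> _ _ /imgpP[x hx <-] /imgpP[y hy <-]; apply/imgpP; exists (x + y).
    exact: submodD.
  by rewrite linearD.
- move=> a _ /imgpP[x hx <-]; apply/imgpP; exists (a *: x).
    exact: submodZ.
  by rewrite linearZ.
Qed.

Lemma imgp_mem P x : x \in P -> f x \in imgp P.
Proof. by move=> hx; apply/imgpP; exists x. Qed.

Definition preimp (Q : pred N) : pred M := fun x => f x \in Q.

Lemma preimpE Q x : (x \in preimp Q) = (f x \in Q). Proof. by []. Qed.

Lemma submod_preimp Q : is_submod Q -> is_submod (preimp Q).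
Proof.
move=> hQ; split.
- by rewrite preimpE linear0 submod0.
- by move=> x y; rewrite !preimpE linearD; apply: submodD.
- by move=> a x; rewrite !preimpE linearZ; apply: submodZ.
Qed.

Lemma imgp_gen P : {subset imgp (gen P) <= gen (imgp P)}.
Proof.
move=> _ /imgpP[x hx <-]; rewrite -preimpE.
apply: (gen_min (submod_preimp (gen_submod _))) hx => z hz.
by rewrite preimpE; apply/gen_sub/imgp_mem.
Qed.

Lemma inj_linear_eq0 x : injective f -> f x = 0 -> x = 0.
Proof. by move=> hi e; apply: hi; rewrite e linear0. Qed.

End LinearImage.

Definition mklinear (R : pzRingType) (U V : lmodType R) (f : U -> V)
  (h : linear f) : {linear U -> V} :=
  HB.pack f (GRing.isLinear.Build R U V *:%R f h).

Lemma scale_linear (R : pzRingType) (M : lmodType R) (b : M) :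
  linear (fun r : R^o => (r : R) *: b).
Proof. by move=> a r s; rewrite scalerDl scalerA. Qed.

Section SubQuot.
Variables (R : pzRingType) (M : lmodType R) (P : pred M).

Lemma subm_val_linear : linear (fun x : subm P => sval x). Proof. by []. Qed.
Definition subm_val : {linear subm P -> M} := mklinear subm_val_linear.

Lemma subm_val_inj : injective subm_val.
Proof. by move=> x y h; apply: (@sm_inj _ _ P). Qed.
Lemma subm_valP (x : subm P) : subm_val x \in gen P.
Proof. by case: x. Qed.

Lemma zero_subm : zero_mod (subm P) <-> forall x, x \in gen P -> x = 0.
Proof.
split=> h.
- by move=> x hx; have := h (exist _ x hx); move/(congr1 sval).
- by move=> [x hx]; apply: sm_inj => /=; apply: h.
Qed.

Lemma qpi_linear : linear (@qpi R M P).
Proof.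
move=> a x y.
have -> : a *: qpi P x + qpi P y = qm_add (qm_scale a (qpi P x)) (qpi P y) by [].
rewrite /qm_add /qm_scale /= qpiDl qpiDr; apply: qpi_eq.
by rewrite opprD addrACA addrN addr0 -scalerBr genZ // canon_sub.
Qed.
Definition quotm_proj : {linear M -> quotm P} := mklinear qpi_linear.

Lemma quotm_proj_surj (y : quotm P) : exists x, quotm_proj x = y.
Proof. by exists (sval y); apply: qpiK. Qed.

Lemma quotm_proj_eq0 x : (quotm_proj x == 0) = (x \in gen P).
Proof.
apply/eqP/idP => [h|h]; last by apply: qpi_eq; rewrite subr0.
have e : Defs.canon P x = Defs.canon P 0 by have := congr1 sval h.
have h1 := canon_sub P x; have h2 := canon_sub P 0.
rewrite e in h1; rewrite sub0r in h2.
by have := genB h1 h2; rewrite opprK subrK.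
Qed.

Lemma zero_quotm : zero_mod (quotm P) <-> forall x, x \in gen P.
Proof.
split=> h.
- by move=> x; rewrite -quotm_proj_eq0 (h (quotm_proj x)).
- by move=> y; have [x <-] := quotm_proj_surj y; apply/eqP; rewrite quotm_proj_eq0.
Qed.

End SubQuot.

Section Restriction.
Variables (R : pzRingType) (A B : lmodType R) (P : pred A) (Q : pred B).
Variables (f : {linear A -> B}) (fPQ : forall x, x \in gen P -> f x \in gen Q).

Definition restr_fun (x : subm P) : subm Q := exist _ (f (sval x)) (fPQ (svalP x)).
Lemma restr_fun_linear : linear restr_fun.
Proof. by move=> a x y; apply: sm_inj; rewrite /= linearP. Qed.
Definition restr_linear : {linear subm P -> subm Q} := mklinear restr_fun_linear.

End Restriction.

(** * Finitely generated modules *)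

Section FinGen.
Variables (R : pzRingType).

Definition spanp (M : lmodType R) (s : seq M) : pred M := gen (fun y => y \in s).

Lemma fingenP (M : lmodType R) :
  fingen M <-> exists s : seq M, forall x, x \in spanp s.
Proof.
split=> [[s hs]|[s hs]].
- exists s => x; have [c ->] := hs x.
  apply: submod_sum; first exact: gen_submod.
  by move=> i; apply/genZ/gen_sub/mem_nth.
exists s.
pose C : pred M := fun x => `[< exists c : 'I_(size s) -> R,
                                   x = \sum_(i < size s) c i *: s`_i >].
have hC : is_submod C.
  split.
  - by apply/asboolP; exists (fun _ => 0); rewrite big1 // => i _; rewrite scale0r.
  - move=> x y /asboolP[c ->] /asboolP[d ->]; apply/asboolP.
    exists (fun i => c i + d i); rewrite -big_split /=.
    by apply: eq_bigr => i _; rewrite scalerDl.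
  - move=> a x /asboolP[c ->]; apply/asboolP; exists (fun i => a * c i).
    by rewrite scaler_sumr; apply: eq_bigr => i _; rewrite scalerA.
move=> x; apply/asboolP; apply: (gen_min hC _ (hs x)) => y ys; apply/asboolP.
exists (fun i => if val i == index y s then 1 else 0).
have hi : (index y s < size s)%N by rewrite index_mem.
rewrite (bigD1 (Ordinal hi)) //= eqxx scale1r nth_index // big1 ?addr0 //.
by move=> i; rewrite -val_eqE /= => /negbTE ->; rewrite scale0r.
Qed.

Lemma fingen_epi (M N : lmodType R) (f : {linear M -> N}) :
  fingen M -> (forall y, exists x, f x = y) -> fingen N.
Proof.
move=> /fingenP[s hs] hf; apply/fingenP; exists (map f s) => y.
have [x <-] := hf y.
have /imgp_gen : f x \in imgp f (spanp s) by apply: imgp_mem.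
by apply: genS => z /imgpP[w ws <-]; apply: map_f.
Qed.

Lemma fingen_quotm (M : lmodType R) (P : pred M) : fingen M -> fingen (quotm P).
Proof. by move=> h; apply: (fingen_epi (f := quotm_proj P)) => //; apply: quotm_proj_surj. Qed.

Lemma subm_lift_seq (M : lmodType R) (P : pred M) (s : seq M) :
  (forall x, x \in s -> x \in gen P) -> exists t : seq (subm P), map (subm_val P) t = s.
Proof.
elim: s => [|x s IH] h; first by exists [::].
have [|t ht] := IH; first by move=> y ys; apply: h; rewrite inE ys orbT.
have hx : x \in gen P by apply: h; rewrite inE eqxx.
by exists (exist _ x hx :: t); rewrite /= ht.
Qed.

Lemma fingen_subm_span (M : lmodType R) (P : pred M) (s : seq M) :
  (forall x, x \in s -> x \in gen P) -> {subset gen P <= spanp s} -> fingen (subm P).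
Proof.
move=> hs hP; have [t ht] := subm_lift_seq hs.
apply/fingenP; exists t => y.
have : {subset spanp s <= imgp (subm_val P) (spanp t)}.
  apply: gen_min; first exact/submod_imgp/gen_submod.
  by move=> z; rewrite -ht => /mapP[w wt ->]; apply/imgp_mem/gen_sub.
by move/(_ _ (hP _ (subm_valP y)))/imgpP => [w hw /subm_val_inj <-].
Qed.

End FinGen.

(** * Chain conditions between two submodules *)

Section ChainConditions.
Variables (R : pzRingType) (M : lmodType R).
Implicit Types (A B C N U L K : pred M) (x y : M).

Definition acc A B := forall L : nat -> pred M,
  (forall n, is_submod (L n)) -> (forall n, {subset A <= L n}) ->
  (forall n, {subset L n <= B}) -> (forall n, {subset L n <= L n.+1}) ->
  exists n, forall m, (n <= m)%N -> {subset L m <= L n}.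

Definition dcc A B := forall L : nat -> pred M,
  (forall n, is_submod (L n)) -> (forall n, {subset A <= L n}) ->
  (forall n, {subset L n <= B}) -> (forall n, {subset L n.+1 <= L n}) ->
  exists n, forall m, (n <= m)%N -> {subset L n <= L m}.

Lemma chain_incr (L : nat -> pred M) n m : (forall n, {subset L n <= L n.+1}) ->
  (n <= m)%N -> {subset L n <= L m}.
Proof.
move=> h le; rewrite -(subnKC le); elim: (m - n)%N => [|k IH] x hx.
  by rewrite addn0.
by rewrite addnS; apply/h/IH.
Qed.

Lemma chain_decr (L : nat -> pred M) n m : (forall n, {subset L n.+1 <= L n}) ->
  (n <= m)%N -> {subset L m <= L n}.
Proof.
move=> h le; rewrite -(subnKC le); elim: (m - n)%N => [|k IH] x.
  by rewrite addn0.
by rewrite addnS => /h; apply: IH.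
Qed.

(* The modular law. *)
Lemma subset_capadd L L' B : is_submod L -> is_submod L' -> is_submod B ->
  {subset L <= L'} -> {subset predI L' B <= L} -> {subset addsm L' B <= addsm L B} ->
  {subset L' <= L}.
Proof.
move=> hL hL' hB sLL' hcap hadd x hx.
have /addsmP[l [b [hl hb e]]] := hadd x (addsml hB hx).
have hbL : b \in L.
  apply: hcap; apply/andP; split=> //.
  have -> : b = x - l by rewrite e addrC addKr.
  by apply: submodB => //; apply: sLL'.
by rewrite e; apply: submodD.
Qed.

Lemma acc_trans A B C : is_submod B -> is_submod C -> {subset A <= B} ->
  {subset B <= C} -> acc A B -> acc B C -> acc A C.
Proof.
move=> hB hC hAB hBC accAB accBC L hL hA hLC hinc.
have [n1 h1] := accAB (fun n => predI (L n) B) (fun n => submodI (hL n) hB)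
  (fun n x hx => introT andP (conj (hA n x hx) (hAB x hx)))
  (fun n x hx => proj2 (andP hx))
  (fun n x hx => introT andP (conj (hinc n x (proj1 (andP hx))) (proj2 (andP hx)))).
have [n2 h2] := accBC (fun n => addsm (L n) B) (fun n => submod_addsm (hL n) hB)
  (fun n x hx => addsmr (hL n) hx) (fun n => addsm_min hC (@hLC n) hBC)
  (fun n => addsmS (hinc n) (fun x h => h)).
exists (maxn n1 n2) => m hm; apply: (subset_capadd (B := B)) => //.
- exact: chain_incr.
- move=> x hx; have /andP[hx1 _] := h1 m (leq_trans (leq_maxl _ _) hm) x hx.
  exact: chain_incr hinc (leq_maxl n1 n2) _ hx1.
- move=> x hx; have := h2 m (leq_trans (leq_maxr _ _) hm) x hx.
  by apply: addsmS => //; apply: chain_incr hinc (leq_maxr n1 n2).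
Qed.

Lemma dcc_trans A B C : is_submod B -> is_submod C -> {subset A <= B} ->
  {subset B <= C} -> dcc A B -> dcc B C -> dcc A C.
Proof.
move=> hB hC hAB hBC dccAB dccBC L hL hA hLC hdec.
have [n1 h1] := dccAB (fun n => predI (L n) B) (fun n => submodI (hL n) hB)
  (fun n x hx => introT andP (conj (hA n x hx) (hAB x hx)))
  (fun n x hx => proj2 (andP hx))
  (fun n x hx => introT andP (conj (hdec n x (proj1 (andP hx))) (proj2 (andP hx)))).
have [n2 h2] := dccBC (fun n => addsm (L n) B) (fun n => submod_addsm (hL n) hB)
  (fun n x hx => addsmr (hL n) hx) (fun n => addsm_min hC (@hLC n) hBC)
  (fun n => addsmS (hdec n) (fun x h => h)).
exists (maxn n1 n2) => m hm; apply: (subset_capadd (B := B)) => //.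
- exact: chain_decr.
- move=> x /andP[hx hxB]; have hx1 := chain_decr hdec (leq_maxl n1 n2) hx.
  by have /andP[] := h1 m (leq_trans (leq_maxl _ _) hm) x (introT andP (conj hx1 hxB)).
- move=> x hx; apply: (h2 m (leq_trans (leq_maxr _ _) hm)).
  by apply: addsmS hx => //; apply: chain_decr hdec (leq_maxr n1 n2).
Qed.

Lemma accS A A' B B' : {subset A <= A'} -> {subset B' <= B} ->
  acc A B -> acc A' B'.
Proof.
move=> h1 h2 accAB L hL hA hB hinc; apply: accAB => // n x.
  by move/h1; apply: hA.
by move/hB; apply: h2.
Qed.

Lemma dccS A A' B B' : {subset A <= A'} -> {subset B' <= B} ->
  dcc A B -> dcc A' B'.
Proof.
move=> h1 h2 dccAB L hL hA hB hdec; apply: dccAB => // n x.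
  by move/h1; apply: hA.
by move/hB; apply: h2.
Qed.

Lemma acc_no_intermediate A B :
  (forall L, is_submod L -> {subset A <= L} -> {subset L <= B} ->
     {subset L <= A} \/ {subset B <= L}) -> acc A B.
Proof.
move=> h L hL hA hB hinc.
case: (pselect (exists n, {subset B <= L n})) => [[n hn]|hn].
  by exists n => m _ x /hB; apply: hn.
exists 0%N => m _ x hx.
case: (h (L m) (hL m) (hA m) (@hB m)) => [h'|h']; first by apply/hA/h'.
by exfalso; apply: hn; exists m.
Qed.

(** * Submodules maximal with respect to avoiding a vector *)

Definition bigcupp (C : {pred (pred M)}) : pred M :=
  fun y => `[< exists2 N, N \in C & y \in N >].

Lemma bigcuppP (C : {pred (pred M)}) y :
  reflect (exists2 N, N \in C & y \in N) (y \in bigcupp C).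
Proof. exact: asboolP. Qed.

Lemma submod_bigcupp (C : {pred (pred M)}) : (exists N, N \in C) ->
  {in C, forall N, is_submod N} ->
  {in C &, forall N N', {subset N <= N'} \/ {subset N' <= N}} ->
  is_submod (bigcupp C).
Proof.
move=> [N0 hN0] hsub htot; split.
- by apply/bigcuppP; exists N0 => //; apply/submod0/hsub.
- move=> y z /bigcuppP[N1 hN1 hy] /bigcuppP[N2 hN2 hz]; apply/bigcuppP.
  case: (htot _ _ hN1 hN2) => s12.
    by exists N2 => //; apply: submodD (hsub _ hN2) (s12 _ hy) hz.
  by exists N1 => //; apply: submodD (hsub _ hN1) hy (s12 _ hz).
- move=> a y /bigcuppP[N1 hN1 hy]; apply/bigcuppP; exists N1 => //.
  exact: submodZ (hsub _ hN1) hy.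
Qed.

Definition avoids A B x N :=
  [/\ is_submod N, {subset A <= N}, {subset N <= B} & x \notin N].

Lemma maximal_avoiding A B x : is_submod A -> {subset A <= B} -> x \notin A ->
  exists N, avoids A B x N /\
    forall L, avoids N B x L -> {subset L <= N}.
Proof.
move=> hA hAB hxA.
pose S : {pred (pred M)} := fun N => `[< avoids A B x N >].
pose Rs : rel (pred M) := fun N N' => `[< {subset N <= N'} >].
have Rs_refl : {in S, reflexive Rs} by move=> N _; apply/asboolP.
have Rs_trans : {in S & &, transitive Rs}.
  by move=> N1 N2 N3 _ _ _ /asboolP h1 /asboolP h2; apply/asboolP => y /h1 /h2.
have [|N /asboolP hN hmax] := @Zorn's_lemma _ Rs S Rs_refl Rs_trans.
  move=> C sCS /wo_chainW htot.
  case: (pselect (exists N, N \in C)) => [hne|hC0]; last first.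
    exists A; first by apply/asboolP; split.
    by move=> N hN; exfalso; apply: hC0; exists N.
  have hS N : N \in C -> avoids A B x N by move/sCS/asboolP.
  exists (bigcupp C); last by move=> N hN; apply/asboolP => y hy; apply/bigcuppP; exists N.
  have [N0 hN0] := hne; apply/asboolP; split.
  - apply: submod_bigcupp => // [N /hS[]//|N1 N2 h1 h2].
    by case/orP: (htot _ _ h1 h2) => /asboolP; [left|right].
  - by move=> y hy; apply/bigcuppP; exists N0 => //; have [_ hAN _ _] := hS _ hN0; apply: hAN.
  - by move=> y /bigcuppP[N1 /hS[_ _ hB _] /hB].
  - by apply/negP => /bigcuppP[N1 /hS[_ _ _ /negP]].
exists N; split=> // L [hL hNL hLB hxL].
have [_ hAN _ _] := hN.
have hLS : L \in S by apply/asboolP; split=> // y /hAN /hNL.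
by apply/asboolP; apply: hmax hLS _; apply/asboolP.
Qed.

Lemma avoids_max_mem B x N L : (forall L, avoids N B x L -> {subset L <= N}) ->
  is_submod L -> {subset N <= L} -> {subset L <= B} -> ~ {subset L <= N} -> x \in L.
Proof. by move=> hmax hL hNL hLB hLN; apply: contrapT => /negP hxL; apply/hLN/hmax. Qed.

End ChainConditions.

(** * Semisimplicity relative to a submodule *)

Section RelativeSocle.
Variables (R : pzRingType) (M : lmodType R).
Implicit Types (A B C N U L K T W : pred M) (x y : M).

(* [simple_over A T]: (A + T)/A is simple or zero; [cosimple U N]: U/(U :&: N)
   is simple or zero.  Hence [{subset B <= socle_over A B}] says that B/A is
   semisimple. *)
Definition simple_over A T := is_submod T /\ forall L, is_submod L -> {subset A <= L} ->
  {subset L <= addsm A T} -> {subset L <= A} \/ {subset T <= L}.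

Definition socle_over A B : pred M :=
  gen (fun y => `[< y \in A \/ exists T, [/\ simple_over A T, {subset T <= B} & y \in T] >]).

Definition cosimple U N := forall L, is_submod L -> {subset predI U N <= L} ->
  {subset L <= U} -> {subset L <= N} \/ {subset U <= L}.

Lemma submod_socle_over A B : is_submod (socle_over A B). Proof. exact: gen_submod. Qed.

Lemma socle_over_base A B x : x \in A -> x \in socle_over A B.
Proof. by move=> hx; apply: gen_sub; apply/asboolP; left. Qed.

Lemma socle_over_simple A B T x :
  simple_over A T -> {subset T <= B} -> x \in T -> x \in socle_over A B.
Proof. by move=> h1 h2 hx; apply: gen_sub; apply/asboolP; right; exists T. Qed.

Lemma socle_overS A A' B B' : A =i A' -> {subset B <= B'} ->
  {subset socle_over A B <= socle_over A' B'}.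
Proof.
move=> e hB; apply: gen_min; first exact: gen_submod.
move=> y /asboolP[hy|[T [[hT hs] hTB hy]]].
  by apply: socle_over_base; rewrite -e.
apply: (socle_over_simple (T := T)) => //; last by move=> z /hTB /hB.
split=> // L hL h1 h2.
have h1' : {subset A <= L} by move=> z; rewrite e; apply: h1.
have h2' : {subset L <= addsm A T}.
  by move=> z /h2; apply: addsmS => // w; rewrite e.
case: (hs L hL h1' h2') => h; [left|right] => //.
by move=> z /h; rewrite e.
Qed.

Section CosimpleAbsorb.
Variables (U N L : pred M).
Hypotheses (hU : is_submod U) (hN : is_submod N) (hL : is_submod L).
Hypotheses (hcos : cosimple U N) (hLU : {subset L <= U}) (hLN : ~ {subset L <= N}).

Lemma cosimple_addsm : {subset U <= addsm (predI U N) L}.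
Proof.
have hUN := submodI hU hN.
case: (hcos (submod_addsm hUN hL) (fun z hz => addsml hL hz)) => [|h|//].
  by apply: addsm_min => // z /andP[].
by exfalso; apply: hLN => z hz; apply/h/addsmr.
Qed.

Lemma cosimple_absorb W : is_submod W -> {subset L <= W} -> {subset W <= U} ->
  {subset predI W N <= L} -> {subset W <= L}.
Proof.
move=> hW hLW hWU hWN w hw.
have /addsmP[a [l [/andP[_ haN] hl e]]] := cosimple_addsm (hWU _ hw).
have haW : a \in W.
  have -> : a = w - l by rewrite e addrK.
  by apply: submodB => //; apply: hLW.
by rewrite e; apply: submodD => //; apply: hWN; apply/andP.
Qed.

End CosimpleAbsorb.

Lemma cosimpleI U N N' : is_submod U -> is_submod N -> is_submod N' ->
  cosimple U N' -> cosimple (predI U N) N'.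
Proof.
move=> hU hN hN' hcos L hL h1 h2.
case: (pselect {subset L <= N'}) => hLN'; [by left | right].
apply: (cosimple_absorb hU hN' hL hcos _ hLN' (submodI hU hN)) => //.
  by move=> z /h2/andP[].
by move=> z /andP[].
Qed.

Lemma simple_over_cosimple U N K : is_submod U -> is_submod N -> is_submod K ->
  cosimple U N -> {subset K <= U} -> simple_over (predI K N) K.
Proof.
move=> hU hN hK hcos hKU; split=> // L hL h1 h2.
have hLK : {subset L <= K} by move=> y /h2; apply: addsm_min => // z /andP[].
case: (pselect {subset L <= N}) => hLN.
  by left=> y hy; apply/andP; split; [apply: hLK | apply: hLN].
right; apply: (cosimple_absorb hU hN hL hcos) => //.
by move=> y /hLK /hKU.
Qed.

Fixpoint all_prop (Q : pred M -> Prop) (Ns : seq (pred M)) : Prop :=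
  if Ns is N :: Ns' then Q N /\ all_prop Q Ns' else True.

Lemma all_prop_impl (P Q : pred M -> Prop) Ns :
  (forall N, P N -> Q N) -> all_prop P Ns -> all_prop Q Ns.
Proof. by move=> h; elim: Ns => //= N Ns IH [/h ? /IH ?]. Qed.

Definition capseq U (Ns : seq (pred M)) : pred M :=
  fun y => `[< y \in U /\ all_prop (fun N => y \in N) Ns >].

Lemma capseqP U Ns y :
  reflect (y \in U /\ all_prop (fun N => y \in N) Ns) (y \in capseq U Ns).
Proof. exact: asboolP. Qed.

Lemma submod_capseq U Ns : is_submod U -> all_prop (@is_submod R M) Ns ->
  is_submod (capseq U Ns).
Proof.
move=> hU hNs; split.
- apply/capseqP; split; first exact: submod0.
  by elim: Ns hNs => //= N Ns IH [hN /IH]; split=> //; apply: submod0.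
- move=> x y /capseqP[hx ax] /capseqP[hy ay]; apply/capseqP; split; first exact: submodD.
  elim: Ns hNs ax ay => //= N Ns IH [hN hNs] [hxN ax] [hyN ay].
  by split; [apply: submodD | apply: IH].
- move=> a x /capseqP[hx ax]; apply/capseqP; split; first exact: submodZ.
  elim: Ns hNs ax => //= N Ns IH [hN hNs] [hxN ax].
  by split; [apply: submodZ | apply: IH].
Qed.

Lemma capseq_sub U Ns : {subset capseq U Ns <= U}.
Proof. by move=> y /capseqP[]. Qed.

Lemma capseq_nil U : capseq U [::] =i U.
Proof. by move=> y; apply/capseqP/idP => [[]|]. Qed.

Lemma capseq_cons U N Ns : capseq U (N :: Ns) =i capseq (predI U N) Ns.
Proof.
move=> y; apply/capseqP/capseqP => /= [[hU [hN a]]|[/andP[hU hN] a]] //.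
by split=> //; apply/andP.
Qed.

Lemma capseq_consI U N Ns : capseq U (N :: Ns) =i predI (capseq U Ns) N.
Proof.
move=> y; apply/capseqP/andP => /= [[hU [hN a]]|[/capseqP[hU a] hN]] //.
by split=> //; apply/capseqP.
Qed.

(* A finite intersection of cosimple submodules has semisimple cokernel. *)
Lemma cosimple_socle_over Ns U : is_submod U ->
  all_prop (fun N => is_submod N /\ cosimple U N) Ns ->
  {subset U <= socle_over (capseq U Ns) U}.
Proof.
elim: Ns U => [|N Ns IH] U hU hNs.
  by move=> x hx; apply: socle_over_base; rewrite capseq_nil.
case: hNs => [[hN hcos] hNs].
have hK : is_submod (capseq U Ns).
  by apply: submod_capseq => //; apply: all_prop_impl hNs => N' [].
have hNs' : all_prop (fun N' => is_submod N' /\ cosimple (predI U N) N') Ns.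
  by apply: all_prop_impl hNs => N' [h1 h2]; split=> //; apply: cosimpleI.
case: (pselect {subset capseq U Ns <= N}) => hKN.
  move=> x /(IH U hU hNs); apply: socle_overS => // y; rewrite capseq_consI.
  by apply/idP/andP => [hy|[]//]; split=> //; apply: hKN.
move=> x /(cosimple_addsm hU hN hK hcos (@capseq_sub _ _) hKN) /addsmP[n [k [hn hk ->]]].
apply: submodD; first exact: submod_socle_over.
  have := IH _ (submodI hU hN) hNs' _ hn.
  by apply: socle_overS => [y|y /andP[]//]; rewrite capseq_cons.
have hsimple := simple_over_cosimple hU hN hK hcos (@capseq_sub _ _).
apply: socle_overS (socle_over_simple hsimple (@capseq_sub _ _) hk) => // y.
by rewrite capseq_consI.
Qed.

End RelativeSocle.

Section SocleImage.
Variables (R : pzRingType) (M N : lmodType R) (f : {linear M -> N}).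
Variables (A' B' : pred M) (A B : pred N).
Hypotheses (hA' : is_submod A') (hA : is_submod A).
Hypotheses (fA : {subset imgp f A' <= A}) (fB : {subset imgp f B' <= B}).

Lemma simple_over_imgp T : simple_over A' T -> simple_over A (imgp f T).
Proof.
move=> [hT hsimple]; split=> [|L hL h1 h2]; first exact: submod_imgp.
pose I := predI (preimp f L) (addsm A' T).
have hI : is_submod I := submodI (submod_preimp f hL) (submod_addsm hA' hT).
have hA'I : {subset A' <= I}.
  move=> a ha; apply/andP; split; last exact: addsml.
  by change (f a \in L); apply/h1/fA/imgp_mem.
case: (hsimple I hI hA'I) => [z /andP[]//|hIA'|hTI]; [left|right].
  move=> y hy; have /addsmP[a [_ [ha /imgpP[t ht <-] e]]] := h2 _ hy.
  have htI : t \in I.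
    apply/andP; split; last exact: addsmr.
    change (f t \in L); have -> : f t = y - a by rewrite e addrC addKr.
    by apply: submodB => //; apply: h1.
  by rewrite e; apply: submodD => //; apply/fA/imgp_mem/hIA'.
by move=> _ /imgpP[t /hTI/andP[ht _] <-].
Qed.

Lemma socle_over_imgp : {subset imgp f (socle_over A' B') <= socle_over A B}.
Proof.
move=> _ /imgpP[x hx <-]; rewrite -preimpE.
apply: (gen_min (submod_preimp f (submod_socle_over _ _))) hx.
move=> y /asboolP[hy|[T [hsT hTB hyT]]]; rewrite preimpE.
  exact/socle_over_base/fA/imgp_mem.
apply: (socle_over_simple (simple_over_imgp hsT)); last exact: imgp_mem.
by move=> _ /imgpP[t /hTB ht <-]; apply/fB/imgp_mem.
Qed.

End SocleImage.

Section FiniteIntersection.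
Variables (R : pzRingType) (M : lmodType R).
Implicit Types (A B N U : pred M).

Definition next_avoided (good : pred M -> Prop) B (Ns : seq (pred M)) :=
  match pselect (exists N, good N /\ exists2 x, x \in capseq B Ns & x \notin N) with
  | left h => sval (cid h) :: Ns
  | right _ => Ns
  end.

Lemma dcc_finite_cap A B (good : pred M -> Prop) :
  is_submod B -> {subset A <= B} ->
  (forall N, good N -> is_submod N /\ {subset A <= N}) -> dcc A B ->
  exists Ns, all_prop good Ns /\
    forall x, x \in capseq B Ns -> forall N, good N -> x \in N.
Proof.
move=> hB hAB hgood hdcc.
pose S n := iter n (next_avoided good B) [::].
have hS n : all_prop good (S n).
  elim: n => //= n IH; rewrite /next_avoided; case: pselect => // h.
  by case: (cid h) => N /= [].
have hsub n : is_submod (capseq B (S n)).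
  by apply: submod_capseq => //; apply: all_prop_impl (hS n) => N /hgood[].
have hAS n : {subset A <= capseq B (S n)}.
  move=> y hy; apply/capseqP; split; first exact: hAB.
  by apply: all_prop_impl (hS n) => N /hgood[_]; apply.
have hdec n : {subset capseq B (S n.+1) <= capseq B (S n)}.
  move=> y; rewrite /S /= /next_avoided; case: pselect => // h.
  by move/capseqP => [hy [_ a]]; apply/capseqP.
have [n0 hn0] := hdcc _ hsub hAS (fun n => @capseq_sub _ _ B (S n)) hdec.
exists (S n0); split=> // x hx N hN; apply: contrapT => /negP hxN.
have := hn0 n0.+1 (leqnSn _); rewrite /S /= /next_avoided.
case: pselect => [h|[]]; last by exists N; split=> //; exists x.
case: (cid h) => N' /= [_ [x' hx' /negP hx'N]] hsubS.
by have /capseqP[_ []] := hsubS _ hx'.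
Qed.

Lemma acc_capseq_cosimple Ns U : is_submod U ->
  all_prop (fun N => is_submod N /\ cosimple U N) Ns -> acc (capseq U Ns) U.
Proof.
elim: Ns U => [|N Ns IH] U hU hNs.
  by apply: acc_no_intermediate => L hL h1 h2; left => y /h2; rewrite capseq_nil.
case: hNs => [[hN hcos] hNs].
have hUN := submodI hU hN.
have hNs' : all_prop (fun N' => is_submod N' /\ cosimple (predI U N) N') Ns.
  by apply: all_prop_impl hNs => N' [h1 h2]; split=> //; apply: cosimpleI.
have accUN : acc (predI U N) U.
  apply: acc_no_intermediate => L hL h1 h2.
  case: (hcos L hL h1 h2) => h; [left|right] => //.
  by move=> y hy; apply/andP; split; [apply: h2|apply: h].
have := acc_trans hUN hU (@capseq_sub _ _ _ Ns) (fun y h => proj1 (andP h))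
  (IH _ hUN hNs') accUN.
by apply: accS => // y; rewrite capseq_cons.
Qed.

End FiniteIntersection.

(* For an ideal [J] of [R] such that [R/J] is semisimple. *)
Section SemisimpleQuotient.
Variables (R : pzRingType) (M : lmodType R) (J : pred R^o).
Hypotheses (submodJ : is_submod J) (one_socle_J : (1 : R^o) \in socle_over J predT).
Implicit Types (A B N L T : pred M) (x y : M).

Lemma socle_over_annihilated A B : is_submod A -> is_submod B ->
  (forall (j : R) x, j \in J -> x \in B -> j *: x \in A) ->
  {subset B <= socle_over A B}.
Proof.
move=> hA hB hJB b hb.
pose phi : {linear R^o -> M} := mklinear (scale_linear b).
have -> : b = phi 1 by rewrite /= scale1r.
apply: (socle_over_imgp submodJ hA) (imgp_mem phi one_socle_J).
  by move=> _ /imgpP[j hj <-]; apply: hJB.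
by move=> _ /imgpP[r _ <-]; apply: submodZ.
Qed.

Lemma maximal_avoiding_cosimple A B N x : is_submod A -> is_submod B ->
  (forall (j : R) y, j \in J -> y \in B -> j *: y \in A) ->
  avoids A B x N -> (forall L, avoids N B x L -> {subset L <= N}) ->
  cosimple B N.
Proof.
move=> hA hB hJB [hN hAN hNB /negP hxN] hmax L hL h1 h2.
case: (pselect {subset L <= N}) => hLN; [by left | right].
have hNL : {subset N <= L} by move=> z hz; apply: h1; apply/andP; split=> //; apply: hNB.
have hxL := avoids_max_mem hmax hL hNL h2 hLN.
have hBN : {subset B <= socle_over N B}.
  by apply: socle_over_annihilated => // j y hj hy; apply/hAN/hJB.
move=> b /hBN; apply: gen_min => // y /asboolP[/hNL //|[T [[hT hsimple] hTB hyT]]].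
have hNT := submod_addsm hN hT.
have hLNT := submodI hL hNT.
have hN_LNT : {subset N <= predI L (addsm N T)}.
  by move=> z hz; apply/andP; split; [apply: hNL | apply: addsml].
have [h|h] := hsimple _ hLNT hN_LNT (fun z hz => proj2 (andP hz)); last first.
  by case/andP: (h _ hyT).
case: (pselect {subset T <= N}) => [hTN|hTN]; first exact/hNL/hTN.
have hxNT : x \in addsm N T.
  apply: (avoids_max_mem hmax hNT (fun z => addsml hT) (addsm_min hB hNB hTB)).
  by move=> hNTN; apply: hTN => z hz; apply/hNTN/addsmr.
by exfalso; apply/hxN/h; apply/andP.
Qed.

Lemma acc_semisimple_dcc A B : is_submod A -> is_submod B -> {subset A <= B} ->
  (forall (j : R) y, j \in J -> y \in B -> j *: y \in A) ->
  dcc A B -> acc A B.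
Proof.
move=> hA hB hAB hJB hdcc.
pose good N := [/\ is_submod N, {subset A <= N} & cosimple B N].
have [|Ns [hNs hcap]] := dcc_finite_cap (good := good) hB hAB _ hdcc.
  by move=> N [].
have hcapA : {subset capseq B Ns <= A}.
  move=> x hx; apply: contrapT => /negP hxA.
  have [N [hav hmax]] := maximal_avoiding hA hAB hxA.
  case: (hav) => hN hAN _ /negP; apply; apply: (hcap x hx N).
  by split=> //; exact: (maximal_avoiding_cosimple hA hB hJB hav hmax).
have hcos : all_prop (fun N => is_submod N /\ cosimple B N) Ns.
  by apply: all_prop_impl hNs => N [].
exact: accS hcapA (fun y h => h) (acc_capseq_cosimple hB hcos).
Qed.

End SemisimpleQuotient.

(** * Artinian and noetherian finitely generated modules *)

Section RegularModule.
Variable R : pzRingType.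

Lemma submod_left_ideal (I : pred R^o) : is_submod I -> left_ideal (I : pred R).
Proof. by case=> h0 hD hZ; split. Qed.

Lemma submod_oneP (K : pred R^o) : is_submod K -> (1 : R^o) \in K -> forall y, y \in K.
Proof.
move=> hK h1 y; have -> : y = y *: (1 : R^o) by rewrite /GRing.scale /= mulr1.
exact: submodZ.
Qed.

Lemma dcc_regular : left_artinian R -> dcc (@zerop _ R^o) predT.
Proof.
move=> HR L hL _ _ hdec.
have [n hn] := HR L (fun n => submod_left_ideal (hL n)) hdec.
by exists n => m hm x; rewrite (hn m hm).
Qed.

End RegularModule.

Section ArtinianFinGen.
Variables (R : pzRingType) (M : lmodType R).
Hypothesis HR : left_artinian R.
Implicit Types (P U : pred M) (x y : M).

Lemma dcc_addcycp P x : is_submod P -> dcc P (addsm P (cycp x)).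
Proof.
move=> hP L hL hA hB hdec.
pose phi : {linear R^o -> M} := mklinear (scale_linear x).
have [n hn] := dcc_regular HR (fun n => submod_preimp phi (hL n))
  (fun n => zerop_sub (submod_preimp phi (hL n))) (fun n _ _ => isT)
  (fun n r => hdec n (phi r)).
exists n => m hm y hy.
case/addsmP: (hB n y hy) => p [z [hp /asboolP[r ->] e]].
have hrn : r \in preimp phi (L n).
  change (r *: x \in L n); have -> : r *: x = y - p by rewrite e addrC addKr.
  by apply: submodB => //; apply: hA.
have hrm : r *: x \in L m := hn m hm r hrn.
by rewrite e; apply: submodD => //; apply: hA.
Qed.

Lemma dcc_spanp (s : seq M) : dcc zerop (spanp s).
Proof.
elim: s => [|x s IH].
  move=> L hL hA hB hdec; exists 0%N => m _ y /hB hy.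
  have /eqP -> : y \in zerop by apply: (gen_min submod_zerop) hy.
  exact: submod0.
have hS : is_submod (spanp s) := gen_submod _.
have := dcc_trans hS (submod_addsm hS (submod_cycp x)) (zerop_sub hS)
  (fun y h => addsml (submod_cycp x) h) IH (dcc_addcycp (x := x) hS).
apply: dccS => // y; apply: gen_min => // [|z]; first exact: submod_addsm (submod_cycp x).
rewrite inE => /orP[/eqP ->|hz]; first exact/addsmr/cycp_mem.
exact/addsml/gen_sub/hz/submod_cycp.
Qed.

Lemma dcc_fingen : fingen M -> dcc (@zerop _ M) predT.
Proof.
case/fingenP=> s hs L hL hA hB hdec.
by apply: (dcc_spanp (s := s)) => // n y _; apply: hs.
Qed.

End ArtinianFinGen.

Section NoetherianFinGen.
Variables (R : pzRingType) (M : lmodType R).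
Implicit Types (U : pred M) (x y : M).

Definition next_gen U (s : seq M) : seq M :=
  match pselect (exists u, (u \in U) && (u \notin spanp s)) with
  | left h => xchoose h :: s
  | right _ => s
  end.

Lemma acc_finite_spanp U : acc (@zerop _ M) predT -> is_submod U ->
  exists s : seq M, (forall x, x \in s -> x \in U) /\ {subset U <= spanp s}.
Proof.
move=> hacc hU; apply: contrapT => hne.
pose S n := iter n (next_gen U) [::].
have hSU n x : x \in S n -> x \in U.
  elim: n x => //= k IH x; rewrite /next_gen; case: pselect => [h|_]; last exact: IH.
  rewrite inE => /orP[/eqP ->|]; last exact: IH.
  by have /andP[] := xchooseP h.
have hinc n : {subset spanp (S n) <= spanp (S n.+1)}.
  apply: genS => x hx /=; rewrite /next_gen; case: pselect => // h.
  by rewrite inE hx orbT.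
have [n hn] := hacc (fun n => spanp (S n)) (fun n => gen_submod _)
  (fun n => zerop_sub (gen_submod _)) (fun n x _ => isT) hinc.
have /not_subsetP[u hu hun] : ~ {subset U <= spanp (S n)}.
  by move=> h; apply: hne; exists (S n); split=> //; apply: hSU.
have := hn n.+1 (leqnSn _); rewrite /= /next_gen.
case: pselect => [h|[]]; last by exists u; rewrite hu.
move=> hsub; have /andP[_ /negP] := xchooseP h; apply; apply: hsub.
by apply: gen_sub; rewrite inE eqxx.
Qed.

Lemma fingen_subm_acc U : acc (@zerop _ M) predT -> is_submod U -> fingen (subm U).
Proof.
move=> hacc hU; have [s [hs hUs]] := acc_finite_spanp hacc hU.
apply: (fingen_subm_span (s := s)); first by move=> x /hs; rewrite gen_id.
by move=> x; rewrite gen_id //; apply: hUs.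
Qed.

End NoetherianFinGen.

(** * The radical and the Jacobson radical *)

Notation radm M := (@Defs.rad _ M).
Notation socm M := (@Defs.soc _ M).

Section Radical.
Variables (R : pzRingType) (M : lmodType R).
Implicit Types (N : pred M) (x : M).

Lemma radP x : reflect (forall N, maximal_sub N -> x \in N) (x \in radm M).
Proof. exact: asboolP. Qed.

Lemma submod_rad : is_submod (radm M).
Proof.
split.
- by apply/radP => N [hN _ _]; apply: submod0.
- move=> x y /radP hx /radP hy; apply/radP => N hm.
  by case: (hm) => hN _ _; apply: submodD => //; [apply: hx|apply: hy].
- move=> a x /radP hx; apply/radP => N hm.
  by case: (hm) => hN _ _; apply: submodZ => //; apply: hx.
Qed.

Lemma maximal_cosimple N : maximal_sub N -> cosimple predT N.
Proof.
case=> hN _ hmax L hL hNL _.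
by case: (hmax L hL (fun y hy => hNL y (introT andP (conj isT hy)))); [left|right].
Qed.

Lemma cosimple_maximal N x : is_submod N -> cosimple predT N -> x \notin N -> maximal_sub N.
Proof.
move=> hN hcos hxN; split=> //; first by exists x.
move=> K hK hNK.
case: (hcos K hK (fun y hy => hNK y (proj2 (andP hy))) (fun y _ => isT)) => h; [left|right] => //.
by move=> y; apply: h.
Qed.

End Radical.

Arguments submod_rad {R M}.

Section Jacobson.
Variable R : pzRingType.

Local Notation jacobson := (radm R^o).

Lemma jacobson_scale_maximal (M : lmodType R) (N : pred M) (x : M) (j : R) :
  maximal_sub N -> (j : R^o) \in jacobson -> j *: x \in N.
Proof.
case=> hN _ hmax /radP hj.
case: (boolP (x \in N)) => hx; first exact: submodZ.
pose phi : {linear R^o -> M} := mklinear (scale_linear x).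
have hL := submod_preimp phi hN.
apply: (hj (preimp phi N)); split=> //; first by exists 1; rewrite preimpE /= scale1r.
move=> K hK hLK; case: (boolP ((1 : R^o) \in K)) => h1K; first by right; apply: submod_oneP.
left=> r hr; apply: contrapT => hrx.
have hNr := submod_addsm hN (submod_cycp ((r : R) *: x)).
case: (hmax _ hNr (fun y hy => addsml (submod_cycp _) hy)) => [h|h].
  by apply/hrx/h/addsmr/cycp_mem.
case/addsmP: (h x) => n [z [hn /asboolP[s hs] e]].
have h1sr : (1 - s * r : R^o) \in K.
  apply: hLK; rewrite preimpE /= scalerBl scale1r -scalerA -hs.
  by have -> : x - z = n by rewrite e addrK.
move/negP: h1K; apply.
have -> : (1 : R^o) = (1 - s * r) + s * r by rewrite subrK.
by apply: submodD => //; apply: submodZ.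
Qed.

Lemma jacobson_mulr (j r : R) : (j : R^o) \in jacobson -> (j * r : R^o) \in jacobson.
Proof.
move=> hj; apply/radP => L hL.
exact: (jacobson_scale_maximal (M := R^o) r hL hj).
Qed.

Lemma maximal_avoiding_one (N : pred R^o) : is_submod N -> (1 : R^o) \notin N ->
  (forall L, avoids N predT 1 L -> {subset L <= N}) -> maximal_sub N.
Proof.
move=> hN h1N hmax; split=> //; first by exists 1.
move=> K hK hNK; case: (boolP ((1 : R^o) \in K)) => h1K.
  by right; apply: submod_oneP.
by left; apply: hmax.
Qed.

Lemma jacobson_unitl (a : R) : (a : R^o) \in jacobson -> exists u : R, u * (1 - a) = 1.
Proof.
move=> ha.
have hL0 := submod_cycp (1 - a : R^o).
case: (boolP ((1 : R^o) \in cycp (1 - a : R^o))) => [/asboolP[u hu]|h1].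
  by exists u; rewrite [RHS]hu.
have [N [hav hmax]] := maximal_avoiding hL0 (fun y _ => isT) h1.
case: hav => hN hAN _ h1N.
have haN : (a : R^o) \in N := elimT (radP _) ha N (maximal_avoiding_one hN h1N hmax).
have h1aN : (1 - a : R^o) \in N by apply/hAN/cycp_mem.
by case/negP: h1N; rewrite -(subrK a 1); apply: submodD.
Qed.

(* R/J is semisimple: J is a finite intersection of maximal left ideals. *)
Lemma one_socle_jacobson : left_artinian R -> (1 : R^o) \in socle_over jacobson predT.
Proof.
move=> HR.
have [|Ls [hLs hcap]] := dcc_finite_cap (good := @maximal_sub _ R^o) submod_predT
  (fun y _ => isT) _ (dcc_regular HR).
  by move=> N hN; split; [case: hN | apply: zerop_sub; case: hN].
have hcos : all_prop (fun N => is_submod N /\ cosimple predT N) Ls.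
  by apply: all_prop_impl hLs => N hN; split; [case: hN | apply: maximal_cosimple].
have := cosimple_socle_over submod_predT hcos (isT : (1 : R^o) \in predT).
apply: socle_overS => // r; apply/idP/idP => [hr|/radP hr].
  by apply/radP; apply: hcap.
apply/capseqP; split=> //.
by elim: Ls hLs {hcap hcos} => //= L Ls IH [hL /IH]; split=> //; apply: hr.
Qed.

End Jacobson.

Section RadicalArtinian.
Variables (R : pzRingType) (HR : left_artinian R).

Local Notation jacobson := (radm R^o).

Definition jmod (M : lmodType R) : pred M :=
  gen (fun y => `[< exists (j : R) z, (j : R^o) \in jacobson /\ y = j *: z >]).
Arguments jmod : clear implicits.

Lemma jmod_scale (M : lmodType R) (j : R) (z : M) :
  (j : R^o) \in jacobson -> j *: z \in jmod M.
Proof. by move=> hj; apply: gen_sub; apply/asboolP; exists j, z. Qed.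

Lemma jmod_rad (M : lmodType R) : {subset jmod M <= radm M}.
Proof.
apply: gen_min; first exact: submod_rad.
move=> _ /asboolP[j [z [hj ->]]]; apply/radP => N hN.
exact: jacobson_scale_maximal.
Qed.

Lemma rad_jmod (M : lmodType R) : {subset radm M <= jmod M}.
Proof.
move=> x hx; apply: contrapT => /negP hxJ.
have hJ : is_submod (jmod M) := gen_submod _.
have [N [hav hmax]] := maximal_avoiding hJ (fun y _ => isT) hxJ.
have hcos : cosimple predT N.
  apply: (maximal_avoiding_cosimple submod_rad (one_socle_jacobson HR) hJ
    submod_predT _ hav hmax).
  by move=> j y hj _; apply: jmod_scale.
case: hav => hN _ _ hxN.
by move/radP: hx => /(_ N (cosimple_maximal hN hcos hxN)); apply/negP.
Qed.

Lemma rad_epi (M N : lmodType R) (f : {linear M -> N}) :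
  (forall y, exists x, f x = y) -> {subset radm N <= imgp f (radm M)}.
Proof.
move=> hf y /rad_jmod; apply: gen_min; first exact/submod_imgp/submod_rad.
move=> _ /asboolP[j [z [hj ->]]]; have [x <-] := hf z.
by apply/imgpP; exists (j *: x); [apply/jmod_rad/jmod_scale | rewrite linearZ].
Qed.

Lemma rad_nat (M N : lmodType R) (f : {linear M -> N}) x :
  x \in radm M -> f x \in radm N.
Proof.
move=> /rad_jmod hx; apply: jmod_rad; rewrite -preimpE.
apply: (gen_min (submod_preimp f (gen_submod _))) hx.
by move=> _ /asboolP[j [z [hj ->]]]; rewrite preimpE linearZ; apply: jmod_scale.
Qed.

Lemma simple_over_zerop_soc (W : lmodType R) (T : pred W) :
  simple_over zerop T -> {subset T <= socm W}.
Proof.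
move=> [hT hsimple] y hyT.
case: (pselect {subset T <= zerop}) => [hT0|/not_subsetP[t ht ht0]].
  by move/hT0/eqP: hyT => ->; apply: gen0.
apply: gen_sub; apply/asboolP; exists T => //; split=> // [|K hK hKT].
  by exists t.
case: (hsimple K hK (zerop_sub hK) (fun z hz => addsmr submod_zerop (hKT z hz))) => h.
  by left=> z /h /eqP.
by right.
Qed.

Lemma rad0_soc (W : lmodType R) :
  (forall x, x \in radm W -> x = 0) -> forall w, w \in socm W.
Proof.
move=> h0 w.
have : w \in socle_over zerop predT.
  apply: (socle_over_annihilated submod_rad (one_socle_jacobson HR) submod_zerop
    submod_predT) => // j y hj _.
  by apply/eqP/h0/jmod_rad/jmod_scale.
apply: gen_min; first exact: gen_submod.
move=> y /asboolP[/eqP->|[T [hsimple _ hyT]]]; first exact: gen0.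
exact: simple_over_zerop_soc hsimple _ hyT.
Qed.

End RadicalArtinian.

Lemma soc_nat (R : pzRingType) (A B : lmodType R) (f : {linear A -> B}) x :
  x \in socm A -> f x \in socm B.
Proof.
move=> hx; rewrite -preimpE.
apply: (gen_min (submod_preimp f (gen_submod _))) hx.
move=> y /asboolP[S [hS [s hs hs0] hK] hy]; rewrite preimpE.
case: (pselect (forall t, t \in S -> f t = 0)) => [h0|hn].
  by rewrite h0 //; apply: gen0.
have [t ht hft] : exists2 t, t \in S & f t != 0.
  apply: contrapT => hne; apply: hn => t ht; apply: contrapT => /eqP hne'.
  by apply: hne; exists t.
apply: gen_sub; apply/asboolP; exists (imgp f S); last exact: imgp_mem.
split; first exact: submod_imgp.
  by exists (f t) => //; apply: imgp_mem.
move=> K hKs hKS.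
have hK' := submodI hS (submod_preimp f hKs).
case: (hK _ hK' (fun z hz => proj1 (andP hz))) => [h|h]; [left|right].
  move=> k hk; case/imgpP: (hKS k hk) => u hu e.
  have : u \in predI S (preimp f K).
    by apply/andP; split=> //; change (f u \in K); rewrite e.
  by move/h => u0; rewrite -e u0 linear0.
by move=> _ /imgpP[u hu <-]; have /andP[_] := h u hu.
Qed.

(** * Nilpotency of the Jacobson radical and the Hopkins-Levitzki theorem *)

Section MinimalCondition.
Variables (R : pzRingType) (M : lmodType R).

Definition next_smaller (F : pred M -> Prop) (L : pred M) : pred M :=
  match pselect (exists L', F L' /\ {subset L' <= L} /\ ~ {subset L <= L'}) with
  | left h => sval (cid h)
  | right _ => L
  end.

Lemma dcc_minimal (F : pred M -> Prop) : dcc (@zerop _ M) predT ->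
  (forall L, F L -> is_submod L) -> forall L0, F L0 ->
  exists L, F L /\ forall L', F L' -> {subset L' <= L} -> {subset L <= L'}.
Proof.
move=> hdcc hF L0 hL0.
pose S n := iter n (next_smaller F) L0.
have hS n : F (S n).
  elim: n => //= n IH; rewrite /next_smaller; case: pselect => // h.
  by case: (cid h) => L /= [].
have hdec n : {subset S n.+1 <= S n}.
  rewrite /S /= /next_smaller; case: pselect => [h|_]; last by move=> y.
  by case: (cid h) => L /= [_ []].
have [n hn] := hdcc S (fun n => hF _ (hS n)) (fun n => zerop_sub (hF _ (hS n)))
  (fun n y _ => isT) hdec.
exists (S n); split=> // L' hL' hsub; apply: contrapT => hns.
have := hn n.+1 (leqnSn _).
rewrite /S /= /next_smaller; case: pselect => [h|[]]; last by exists L'.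
by case: (cid h) => L'' /= [_ [_ hns']].
Qed.

End MinimalCondition.

Section JacobsonNilpotent.
Variables (R : pzRingType) (HR : left_artinian R).

Local Notation jacobson := (radm R^o).

Definition prod_ideal (P Q : pred R^o) : pred R^o :=
  gen (fun y : R^o => `[< exists (c d : R), (c : R^o) \in P /\ (d : R^o) \in Q /\ y = c * d >]).

Lemma prod_ideal_mul (P Q : pred R^o) (c d : R) :
  (c : R^o) \in P -> (d : R^o) \in Q -> (c * d : R^o) \in prod_ideal P Q.
Proof. by move=> hc hd; apply: gen_sub; apply/asboolP; exists c, d. Qed.

Fixpoint jpow (n : nat) : pred R^o :=
  if n is n'.+1 then prod_ideal jacobson (jpow n') else predT.

Lemma submod_jpow n : is_submod (jpow n).
Proof. by case: n => [|n]; [exact: submod_predT | exact: gen_submod]. Qed.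

Lemma jpow_decr n : {subset jpow n.+1 <= jpow n}.
Proof.
case: n => [//|n]; apply: gen_min; first exact: submod_jpow.
move=> _ /asboolP[b [a [hb [ha ->]]]].
exact: (submodZ b (submod_jpow n.+1) ha).
Qed.

Lemma jpow1_jacobson : {subset jpow 1 <= jacobson}.
Proof.
apply: gen_min; first exact: submod_rad.
by move=> _ /asboolP[b [a [hb [_ ->]]]]; apply: jacobson_mulr.
Qed.

Lemma jpowD m n : {subset jpow (m + n) <= prod_ideal (jpow m) (jpow n)}.
Proof.
elim: m n => [|m IH] n y.
  by move=> hy; rewrite -[y]mul1r; apply: prod_ideal_mul.
rewrite addSn; apply: gen_min; first exact: gen_submod.
move=> _ /asboolP[b [a [hb [ha ->]]]].
have hT : is_submod (prod_ideal (jpow m.+1) (jpow n)) := gen_submod _.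
pose S : pred R^o := fun s => `[< forall b : R, (b : R^o) \in jacobson ->
     ((b * s : R) : R^o) \in prod_ideal (jpow m.+1) (jpow n) >].
have hS : is_submod S.
  split.
  - by apply/asboolP => b' _; rewrite mulr0; apply: submod0.
  - move=> s1 s2 /asboolP h1 /asboolP h2; apply/asboolP => b' hb'.
    by rewrite mulrDr; apply: submodD => //; [apply: h1|apply: h2].
  - move=> r s /asboolP h1; apply/asboolP => b' hb'.
    have -> : (b' * (r *: s : R^o) : R) = (b' * r) * s by rewrite mulrA.
    by apply: h1; apply: jacobson_mulr.
have /asboolP : a \in S.
  apply: (gen_min hS) (IH n a ha) => _ /asboolP[c [d [hc [hd ->]]]].
  apply/asboolP => b' hb'; rewrite mulrA; apply: prod_ideal_mul => //.
  exact: prod_ideal_mul.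
by apply.
Qed.

Lemma jacobson_mul_fixed (a y : R) : (a : R^o) \in jacobson -> a * y = y -> y = 0.
Proof.
move=> ha ey; have [u hu] := jacobson_unitl ha.
by rewrite -[y]mul1r -hu -mulrA mulrBl mul1r ey subrr mulr0.
Qed.

(* Nakayama-type argument: take L minimal among the left ideals with K L <> 0 and
   k y <> 0 with k in K, y in L; then K y = L by minimality, so y = a y with a in J. *)
Lemma idempotent_jacobson0 (K : pred R^o) : is_submod K -> {subset K <= jacobson} ->
  {subset K <= prod_ideal K K} -> forall k : R^o, k \in K -> k = 0.
Proof.
move=> hK hKJ hKK k0 hk0; apply: contrapT => /eqP hk0n.
pose F (L : pred R^o) := is_submod L /\ exists (k l : R),
   (k : R^o) \in K /\ (l : R^o) \in L /\ k * l != 0.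
have hFT : F predT by split; [exact: submod_predT | exists k0, 1; rewrite mulr1].
have [L0 [[hL0 [k [y [hk [hy hky]]]]] hmin]] := dcc_minimal (F := F) (dcc_regular HR)
  (fun L => @proj1 _ _) hFT.
pose mul_y : {linear R^o -> R^o} := mklinear (scale_linear (y : R^o)).
have hKyL : {subset imgp mul_y K <= L0}.
  by move=> _ /imgpP[k' _ <-]; exact: (submodZ k' hL0 hy).
have hFKy : F (imgp mul_y K).
  split; first exact: submod_imgp.
  apply: contrapT => hne.
  have : k \in preimp mul_y zerop.
    apply: (gen_min (submod_preimp mul_y submod_zerop)) (hKK k hk).
    move=> _ /asboolP[c [d [hc [hd ->]]]]; rewrite preimpE zeropE /= -scalerA.
    apply/eqP; apply: contrapT => /eqP hcd; apply: hne.
    by exists c, (d * y); split=> //; split=> //; apply: imgp_mem.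
  by move=> hky0; move/negP: hky; apply.
have /imgpP[a ha ey] := hmin _ hFKy hKyL y hy.
by move/negP: hky; apply; rewrite (jacobson_mul_fixed (hKJ a ha) ey) mulr0.
Qed.

Lemma jacobson_nilpotent : exists n, forall r : R^o, r \in jpow n -> r = 0.
Proof.
have [N0 hN0] := dcc_regular HR submod_jpow (fun n => zerop_sub (submod_jpow n))
  (fun n y _ => isT) jpow_decr.
exists N0.+1; apply: idempotent_jacobson0; first exact: submod_jpow.
  by move=> x hx; apply: jpow1_jacobson; apply: (chain_decr jpow_decr (isT : (1 <= N0.+1)%N)).
move=> x hx; apply: jpowD; apply: (hN0 _ (leq_trans (leqnSn N0) (leq_addr _ _))).
exact: jpow_decr.
Qed.

End JacobsonNilpotent.

Section HopkinsLevitzki.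
Variables (R : pzRingType) (HR : left_artinian R) (M : lmodType R).

Local Notation jacobson := (radm R^o).

Definition jpow_mod (i : nat) : pred M :=
  gen (fun y => `[< exists (r : R) z, (r : R^o) \in @jpow R i /\ y = r *: z >]).

Lemma submod_jpow_mod i : is_submod (jpow_mod i). Proof. exact: gen_submod. Qed.

Lemma jpow_mod_scale i (r : R) z : (r : R^o) \in @jpow R i -> r *: z \in jpow_mod i.
Proof. by move=> hr; apply: gen_sub; apply/asboolP; exists r, z. Qed.

Lemma jpow_mod_decr i : {subset jpow_mod i.+1 <= jpow_mod i}.
Proof.
apply: gen_min; first exact: submod_jpow_mod.
by move=> _ /asboolP[r [z [hr ->]]]; apply/jpow_mod_scale/jpow_decr.
Qed.

Lemma jacobson_jpow_mod i (j : R) y : (j : R^o) \in jacobson -> y \in jpow_mod i ->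
  j *: y \in jpow_mod i.+1.
Proof.
move=> hj hy.
pose Q : pred M := fun y => `[< forall j : R, (j : R^o) \in jacobson ->
  j *: y \in jpow_mod i.+1 >].
have hQ : is_submod Q.
  split.
  - by apply/asboolP => j' _; rewrite scaler0; apply: submod0; apply: submod_jpow_mod.
  - move=> a b /asboolP h1 /asboolP h2; apply/asboolP => j' hj'.
    by rewrite scalerDr; apply: submodD; [apply: submod_jpow_mod|apply: h1|apply: h2].
  - move=> a b /asboolP h1; apply/asboolP => j' hj'.
    by rewrite scalerA; apply: h1; apply: jacobson_mulr.
have /asboolP : y \in Q.
  apply: (gen_min hQ) hy => _ /asboolP[r [z [hr ->]]]; apply/asboolP => j' hj'.
  by rewrite scalerA; apply/jpow_mod_scale/prod_ideal_mul.
by apply.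
Qed.

(* Each layer J^i M / J^(i+1) M is artinian and annihilated by J, hence noetherian;
   J is nilpotent, so M itself is noetherian. *)
Lemma acc_fingen : fingen M -> acc (@zerop _ M) predT.
Proof.
move=> hfg.
have hdcc := dcc_fingen HR hfg.
have hlayer i : acc (jpow_mod i.+1) (jpow_mod i).
  apply: (acc_semisimple_dcc submod_rad (one_socle_jacobson HR) (submod_jpow_mod _)
    (submod_jpow_mod _) (@jpow_mod_decr i)).
    by move=> j y hj hy; apply: jacobson_jpow_mod.
  by apply: (dccS _ _ hdcc) => // y /eqP->; apply/submod0/submod_jpow_mod.
have hind i : acc (jpow_mod i) predT.
  elim: i => [|i IH].
    apply: acc_no_intermediate => L hL h1 h2; left => y _.
    by rewrite -[y]scale1r; apply: jpow_mod_scale.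
  exact: (acc_trans (submod_jpow_mod i) submod_predT (@jpow_mod_decr i)
    (fun y _ => isT) (hlayer i) IH).
have [n hn] := jacobson_nilpotent HR.
apply: (accS _ _ (hind n)) => // y hy.
apply: (gen_min submod_zerop) hy => _ /asboolP[r [z [hr ->]]].
by rewrite (hn r hr) scale0r zeropE.
Qed.

Lemma fingen_subm (U : pred M) : fingen M -> is_submod U -> fingen (subm U).
Proof. by move=> hfg hU; apply: fingen_subm_acc => //; apply: acc_fingen. Qed.

End HopkinsLevitzki.

(** * Relative Loewy lengths *)

Section LinearPullback.
Variables (R : pzRingType) (HR : left_artinian R).

(* The fibre product of f \o eX and eY, which stays in mod R. *)
Lemma fingen_pullback (X Y XX YY : lmodType R) (eX : {linear XX -> X})
  (eY : {linear YY -> Y}) (f : {linear X -> Y}) : fingen XX -> injective eY ->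
  (forall y', exists x', f (eX x') = eY y') ->
  exists (D : lmodType R) (g : {linear D -> YY}) (i : {linear D -> XX}),
    [/\ fingen D, (forall y', exists d, g d = y') & forall d, eY (g d) = f (eX (i d))].
Proof.
move=> hXX hinj hs.
pose Dp : pred XX := fun x' => `[< exists y', eY y' = f (eX x') >].
have hDp : is_submod Dp.
  split.
  - by apply/asboolP; exists 0; rewrite !linear0.
  - move=> u v /asboolP[u' hu] /asboolP[v' hv]; apply/asboolP; exists (u' + v').
    by rewrite !linearD hu hv.
  - move=> a u /asboolP[u' hu]; apply/asboolP; exists (a *: u').
    by rewrite !linearZ hu.
pose gf (d : subm Dp) : YY :=
  match pselect (exists y', eY y' = f (eX (sval d))) with
  | left h => sval (cid h)
  | right _ => 0
  end.
have geq d : eY (gf d) = f (eX (sval d)).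
  rewrite /gf; case: pselect => [h|[]]; first by case: (cid h).
  by have := svalP d; rewrite gen_id // => /asboolP.
have glin : linear gf by move=> a u v; apply: hinj; rewrite geq !linearP !geq.
exists (subm Dp), (mklinear glin), (subm_val Dp); split=> //.
- exact: fingen_subm.
- move=> y'; have [x' hx'] := hs y'.
  have hx'D : x' \in gen Dp by rewrite gen_id //; apply/asboolP; exists y'.
  by exists (exist _ x' hx'D); apply: hinj; rewrite /= (geq (exist _ x' hx'D)).
Qed.

End LinearPullback.

Lemma prad_gen (R : pzRingType) (a : preradical R) (X : lmodType R) x : fingen X ->
  (x \in gen (prad _ a X)) = (x \in prad _ a X).
Proof. by move=> hX; rewrite gen_id //; apply: prad_submod. Qed.

Section UpperLoewy.
Variables (R : pzRingType) (HR : left_artinian R) (alpha : preradical R).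
Hypothesis Hepi : preserves_epi alpha.
Local Notation Fa := (F_obj (pr_obj alpha)).
Implicit Types (X Y : lmodType R).

Fixpoint loewy_emb (k : nat) (X : lmodType R) : iter k Fa X -> X :=
  match k return iter k Fa X -> X with
  | 0 => fun x => x
  | k'.+1 => fun z => @loewy_emb k' X (sval (sval z))
  end.
Arguments loewy_emb : clear implicits.

Lemma loewy_emb_linear k X : linear (loewy_emb k X).
Proof.
elim: k => [|k IH] a u v //=.
exact: (IH a (sval (sval u)) (sval (sval v))).
Qed.

Definition loewy_embL k X : {linear iter k Fa X -> X} := mklinear (@loewy_emb_linear k X).

Lemma loewy_emb_inj k X : injective (loewy_embL k X).
Proof.
elim: k => [|k IH] u v //= e.
by apply: sm_inj; apply: sm_inj; apply: IH.
Qed.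

Lemma fingen_iter_F k X : fingen X -> fingen (iter k Fa X).
Proof.
move=> hX; elim: k => //= k IH.
apply: fingen_subm => //; last exact: submod_rad.
by apply: fingen_subm => //; apply: prad_submod.
Qed.

(* [alpha_layer k X] is alpha F^k X, seen inside X. *)
Definition alpha_layer k X : pred X := imgp (loewy_embL k X) (prad _ alpha (iter k Fa X)).
Arguments alpha_layer : clear implicits.

Lemma zero_alpha_layer k X : fingen X ->
  zero_mod (pr_obj alpha (iter k Fa X)) <-> (forall x, x \in alpha_layer k X -> x = 0).
Proof.
move=> hX; have hXX := fingen_iter_F k hX.
split=> h.
- move=> _ /imgpP[x' hx' <-]; rewrite ((zero_subm _).1 h x') ?linear0 //.
  by rewrite prad_gen.
- apply/(zero_subm _).2 => x'; rewrite prad_gen // => hx'.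
  by apply: (inj_linear_eq0 (@loewy_emb_inj k X)); apply/h/imgp_mem.
Qed.

Lemma alpha_layer_epi k X Y (f : {linear X -> Y}) : fingen X -> fingen Y ->
  (forall y', exists x', f (loewy_embL k X x') = loewy_embL k Y y') ->
  {subset alpha_layer k Y <= imgp f (alpha_layer k X)}.
Proof.
move=> hX hY hs _ /imgpP[y' hy' <-].
have hXX := fingen_iter_F k hX; have hYY := fingen_iter_F k hY.
have [D [g [i [hD hg he]]]] := fingen_pullback HR hXX (@loewy_emb_inj k Y) hs.
have [d hd gd] := Hepi hD hYY hg hy'.
apply/imgpP; exists (loewy_embL k X (i d)); last by rewrite -he gd.
exact/imgp_mem/(prad_nat _ _ _ _ i hD hXX d hd).
Qed.

(* F = rad \o alpha preserves epimorphisms, since both rad and alpha do. *)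
Lemma iter_F_epi k X Y (f : {linear X -> Y}) : fingen X -> fingen Y ->
  (forall y, exists x, f x = y) ->
  forall y', exists x', f (loewy_embL k X x') = loewy_embL k Y y'.
Proof.
move=> hX hY hf; elim: k => [|k IH] y'; first exact: hf.
have hXX := fingen_iter_F k hX; have hYY := fingen_iter_F k hY.
have [D [g [i [hD hg he]]]] := fingen_pullback HR hXX (@loewy_emb_inj k Y) IH.
have hgP x : x \in gen (prad _ alpha D) -> g x \in gen (prad _ alpha (iter k Fa Y)).
  by rewrite !prad_gen // => hx; apply: (prad_nat _ _ _ _ g hD hYY x hx).
have hiP x : x \in gen (prad _ alpha D) -> i x \in gen (prad _ alpha (iter k Fa X)).
  by rewrite !prad_gen // => hx; apply: (prad_nat _ _ _ _ i hD hXX x hx).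
have hga : forall w, exists v, restr_linear hgP v = w.
  move=> w; have hw : sval w \in prad _ alpha (iter k Fa Y).
    by rewrite -prad_gen //; case: w.
  have [d hd gd] := Hepi hD hYY hg hw.
  have hd' : d \in gen (prad _ alpha D) by rewrite prad_gen.
  by exists (exist _ d hd'); apply: sm_inj; rewrite /= gd.
have hz : sval y' \in radm (pr_obj alpha (iter k Fa Y)).
  by rewrite -(gen_id _ submod_rad); case: y'.
have /imgpP[w hw e] := rad_epi HR hga hz.
have hiw := rad_nat HR (restr_linear hiP) hw.
exists (exist _ (restr_linear hiP w) (gen_sub hiw)).
by rewrite /= -e /=; apply: esym; apply: he.
Qed.

Lemma zero_alpha_iter_F_quotm k X (P : pred X) : fingen X ->
  {subset alpha_layer k X <= gen P} -> zero_mod (pr_obj alpha (iter k Fa (quotm P))).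
Proof.
move=> hX hP.
have hQ := fingen_quotm P hX.
apply/(zero_alpha_layer _ hQ) => x hx.
have := alpha_layer_epi hX hQ (iter_F_epi (k := k) hX hQ (@quotm_proj_surj _ _ P)) hx.
by case/imgpP=> z /hP hz <-; apply/eqP; rewrite quotm_proj_eq0.
Qed.

End UpperLoewy.

Arguments alpha_layer {R} alpha k X.

Section TorsionClasses.
Variables (R : pzRingType) (a : preradical R) (X : lmodType R).
Hypothesis hX : fingen X.

Lemma in_F_zero : in_F a X <-> zero_mod (pr_obj a X).
Proof.
split=> [[_ h]|h]; first by apply/zero_subm => x; rewrite prad_gen //; apply: h.
by split=> // x hx; apply: ((zero_subm (prad _ a X)).1 h); apply: gen_sub.
Qed.

Lemma in_T_zero : in_T a X <-> zero_mod (q_obj a X).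
Proof.
split=> [[_ h]|h]; first by apply/zero_quotm => x; apply/gen_sub/h.
by split=> // x; rewrite -prad_gen //; apply: ((zero_quotm (prad _ a X)).1 h).
Qed.

End TorsionClasses.

Section LowerLoewy.
Variables (R : pzRingType) (HR : left_artinian R) (alpha beta : preradical R).
Hypotheses (Hb : is_radical beta) (Hepi : preserves_epi alpha).
Hypothesis HFT : forall M : lmodType R, in_F alpha M -> in_T beta M.
Local Notation Fa := (F_obj (pr_obj alpha)).
Local Notation Gb := (G_obj (q_obj beta)).

(* F^(n+1) Z lies in F_alpha, hence in T_beta, and it embeds in Z with beta Z = 0;
   so it vanishes: alpha F^n Z has zero radical and is therefore semisimple. *)
Lemma alpha_layer_soc n (Z : lmodType R) : fingen Z ->
  (forall z, z \in prad _ beta Z -> z = 0) ->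
  zero_mod (pr_obj alpha (iter n.+1 Fa Z)) -> {subset alpha_layer alpha n Z <= socm Z}.
Proof.
move=> hZ hbZ h.
have hV := fingen_iter_F HR alpha n.+1 hZ.
have [_ hTV] := HFT ((in_F_zero _ hV).2 h).
have V0 (v : iter n.+1 Fa Z) : v = 0.
  apply: (inj_linear_eq0 (@loewy_emb_inj _ alpha n.+1 Z)); apply: hbZ.
  exact: (prad_nat _ _ _ _ (loewy_embL alpha n.+1 Z) hV hZ v (hTV v)).
have hrad0 w : w \in radm (pr_obj alpha (iter n Fa Z)) -> w = 0.
  by move=> hw; have := congr1 sval (V0 (exist _ w (gen_sub hw))).
have elin : linear (fun w : pr_obj alpha (iter n Fa Z) => loewy_embL alpha n Z (sval w)).
  by move=> c u v; apply: (linearP (loewy_embL alpha n Z) c (sval u) (sval v)).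
move=> _ /imgpP[x' hx' <-].
exact: (soc_nat (mklinear elin) (rad0_soc HR hrad0 (exist _ x' (gen_sub hx')))).
Qed.

Lemma loewy_bound k (N : lmodType R) : fingen N ->
  zero_mod (pr_obj alpha (iter k Fa N)) -> zero_mod (q_obj beta (iter k Gb N)).
Proof.
elim: k N => [|k IH] N hN h.
  by apply/in_T_zero => //; apply/HFT/in_F_zero.
rewrite iterSr; apply: IH; first exact/fingen_quotm/fingen_quotm.
have hZ : fingen (q_obj beta N) := fingen_quotm _ hN.
apply: (zero_alpha_iter_F_quotm HR Hepi hZ) => x hx; apply: gen_sub.
apply: (alpha_layer_soc hZ) hx.
  exact: (proj2 ((in_F_zero _ hZ).2 (Hb hN))).
apply: (zero_alpha_iter_F_quotm HR Hepi hN) => y hy.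
by rewrite ((zero_alpha_layer HR alpha k.+1 hN).1 h y hy) gen0.
Qed.

End LowerLoewy.

Lemma ominnP (P : nat -> Prop) n : ominn P = Some n -> P n.
Proof.
rewrite /ominn; case: pselect => // h [<-].
by case: ex_minnP => m /asboolP.
Qed.

Lemma ominn_le (P : nat -> Prop) m : P m -> exists2 n, ominn P = Some n & (n <= m)%N.
Proof.
move=> hm; rewrite /ominn; case: pselect => [h|[]]; last by exists m; apply/asboolP.
by exists (ex_minn h) => //; case: ex_minnP => k _; apply; apply/asboolP.
Qed.

Lemma ole_ominn (P Q : nat -> Prop) : (forall n, Q n -> P n) -> ole (ominn P) (ominn Q).
Proof.
move=> hQP; case e: (ominn Q) => [n|]; last by case: (ominn P).
by have [m -> /= hmn] := ominn_le (hQP _ (ominnP e)).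
Qed.

Lemma ole_ominn0 (P Q : nat -> Prop) : Q 0%N -> ole (ominn P) (ominn Q) -> P 0%N.
Proof.
move=> /ominn_le[n -> hn]; rewrite leqn0 in hn; rewrite (eqP hn).
by case e: (ominn P) => [m|] //=; rewrite leqn0 => /eqP m0; rewrite -m0; apply: ominnP.
Qed.

Theorem theorem2p3 (R : pzRingType) (HR : left_artinian R)
  (alpha beta : preradical R)
  (Ha : is_radical alpha) (Hb : is_radical beta)
  (Hepi : preserves_epi alpha) :
  (forall M : lmodType R, fingen M ->
      ole (ll_low (q_obj beta) M) (ll_up (pr_obj alpha) M))
  <-> (forall M : lmodType R, in_F alpha M -> in_T beta M).
Proof.
split=> [Hll M hF|HFT M hM].
- have hM := proj1 hF.
  apply/in_T_zero => //; apply: ole_ominn0 (Hll M hM).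
  exact/in_F_zero.
- by apply: ole_ominn => n; apply: loewy_bound.
Qed.
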